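(* Let $r\ge 3$ and let $\mathcal H=(V,E)$ be an $r$-uniform bi-hypergraph. Then $\mathcal H$ is colorable if either of the following holds: (i) $|E|<(r-1)^{r-1}$; (ii) every edge of $\mathcal H$ shares at least one vertex with fewer than $(r-1)^{r-1}\mathrm{e}^{-1}-1$ other edges of $\mathcal H$, where $\mathrm{e}$ is the base of the natural logarithm.
   Context: A bi-hypergraph $\mathcal H=(V,E)$ consists of a finite vertex set $V$ and a set $E$ of subsets of $V$, called edges, with no edge contained in another. It is $r$-uniform if every edge has exactly $r$ elements. A mapping $f:V\to\mathbb N$ is a proper coloring of $\mathcal H$ if $1<|f(e)|<|e|$ for every $e\in E$, where $f(e)=\{f(v):v\in e\}$. $\mathcal H$ is colorable if it has a proper coloring, and uncolorable otherwise. *)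

From Stdlib Require Import Reals.
From mathcomp Require Import all_boot.
Set Implicit Arguments. Unset Strict Implicit. Unset Printing Implicit Defensive.

Definition bi_hypergraph (V : finType) (E : {set {set V}}) : Prop :=
  forall e1 e2, e1 \in E -> e2 \in E -> e1 \subset e2 -> e1 = e2.

Definition uniform (V : finType) (r : nat) (E : {set {set V}}) : Prop :=
  forall e, e \in E -> #|e| = r.

(* f(e) = {f v : v in e}, as a duplicate-free list of colors (nat is infinite,
   so we use a seq rather than a finset); its size is |f(e)|. *)
Definition color_set (V : finType) (f : V -> nat) (e : {set V}) : seq nat :=
  undup [seq f v | v in e].

Definition proper_coloring (V : finType) (E : {set {set V}}) (f : V -> nat) : Prop :=
  forall e, e \in E -> 1 < size (color_set f e) < #|e|.

Definition colorable (V : finType) (E : {set {set V}}) : Prop :=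
  exists f : V -> nat, proper_coloring E f.

Definition nb_intersecting (V : finType) (E : {set {set V}}) (e : {set V}) : nat :=
  #|[set e' in E | (e' != e) && ~~ [disjoint e' & e]]|.

From Stdlib Require Import Reals Lra.
From mathcomp Require Import all_boot zify.
Set Implicit Arguments. Unset Strict Implicit. Unset Printing Implicit Defensive.

(* With only r - 1 colors every edge automatically gets fewer than r colors, so
   a coloring is proper as soon as no edge is monochromatic.  A fixed edge is
   monochromatic under exactly a (r-1)^-(r-1) fraction of all colorings, which
   gives (i) by the union bound.  For (ii) we run a counting version of the
   symmetric Lovasz Local Lemma: if every edge meets at most d others and
   e (d+1) <= (r-1)^(r-1), then adding edges one at a time each step keeps at
   least a d/(d+1) fraction of the colorings with no monochromatic edge. *)

Section GoodColorings.
Variables (V : finType) (q : nat).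
Hypothesis q_gt0 : 0 < q.

Local Notation coloring := {ffun V -> 'I_q}.

Definition monochromatic (e : {set V}) (f : coloring) : bool :=
  [forall x in e, forall y in e, f x == f y].

Definition good (S : {set {set V}}) (f : coloring) : bool :=
  [forall s in S, ~~ monochromatic s f].

Definition n_good (S : {set {set V}}) : nat := #|[set f | good S f]|.

Definition n_good_mono (e : {set V}) (S : {set {set V}}) : nat :=
  #|[set f | good S f && monochromatic e f]|.

Definition agree_off (e : {set V}) (f g : coloring) : bool :=
  [forall x in ~: e, f x == g x].

Lemma card_mono_agree_off (e : {set V}) (f : coloring) :
  e != set0 -> #|[set g | monochromatic e g && agree_off e f g]| = q.
Proof.
move=> /set0Pn [x0 x0e].
pose recolor (c : 'I_q) : coloring := [ffun x => if x \in e then c else f x].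
have -> : [set g | monochromatic e g && agree_off e f g] = recolor @: [set: 'I_q].
  apply/setP => g; rewrite !inE; apply/andP/imsetP.
  - move=> [/forall_inP mg /forall_inP fg]; exists (g x0); first by rewrite inE.
    apply/ffunP => x; rewrite ffunE; case: ifP => xe.
      by apply/eqP; have /forall_inP := mg x xe; apply.
    by apply/esym/eqP; apply: fg; rewrite inE xe.
  - move=> [c _ ->]; split.
      by apply/forall_inP => x xe; apply/forall_inP => y ye; rewrite !ffunE xe ye.
    by apply/forall_inP => x; rewrite inE ffunE => /negbTE ->.
rewrite card_imset ?cardsT ?card_ord // => c d /ffunP /(_ x0).
by rewrite !ffunE x0e.
Qed.

Lemma card_agree_off (e : {set V}) (g : coloring) :
  #|[set f | agree_off e f g]| = q ^ #|e|.
Proof.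
pose F x := if x \in e then (predT : pred 'I_q) else pred1 (g x).
have -> : [set f | agree_off e f g] = [set f in family F].
  apply/setP => f; rewrite !inE; apply/forall_inP/familyP => fg x.
    by rewrite /F; case: ifP => // xe; apply: fg; rewrite inE xe.
  by rewrite inE => /negbTE xe; have := fg x; rewrite /F xe.
rewrite cardsE card_family foldrE big_map big_enum /=.
rewrite (bigID (mem e)) /= [X in _ * X]big1 ?muln1 => [|x /negbTE xe]; last first.
  by rewrite /F xe card1.
rewrite (eq_bigr (fun _ => q)) ?prod_nat_const // => x xe.
by rewrite /F xe card_ord.
Qed.

Lemma monochromatic_agree_off (e s : {set V}) (f g : coloring) :
  [disjoint s & e] -> agree_off e f g -> monochromatic s f = monochromatic s g.
Proof.
move=> dse /forall_inP fg.
have fgs x : x \in s -> f x = g x.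
  by move=> xs; apply/eqP/fg; rewrite inE (disjointFr dse xs).
apply: eq_forallb_in => x xs; apply: eq_forallb_in => y ys.
by rewrite !fgs.
Qed.

Lemma good_agree_off (e : {set V}) (S : {set {set V}}) (f g : coloring) :
  {in S, forall s : {set V}, [disjoint s & e]} -> agree_off e f g -> good S f = good S g.
Proof.
by move=> dS fg; apply: eq_forallb_in => s sS; rewrite (monochromatic_agree_off (dS s sS) fg).
Qed.

(* Colorings that agree off e are interchangeable for the edges of S, so
   conditioning on S leaves e monochromatic with probability q^(1-|e|). *)
Lemma n_good_mono_indep (e : {set V}) (S : {set {set V}}) :
  e != set0 -> {in S, forall s : {set V}, [disjoint s & e]} ->
  q ^ #|e|.-1 * n_good_mono e S = n_good S.
Proof.
move=> e0 dS.
have count_pairs : n_good S * q = n_good_mono e S * q ^ #|e|.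
  rewrite /n_good /n_good_mono -!sum_nat_cond_const.
  transitivity (\sum_(f | good S f) \sum_(g | monochromatic e g && agree_off e f g) 1).
    by apply: eq_bigr => f _; rewrite sum1dep_card card_mono_agree_off.
  rewrite (exchange_big_dep (fun g => good S g && monochromatic e g)) => [|f g Sf /andP[eg fg]]; last first.
    by rewrite -(good_agree_off dS fg) Sf.
  apply: eq_bigr => g /andP [Sg eg]; rewrite -(card_agree_off e g) -sum1dep_card.
  apply: eq_bigl => f; case fg: (agree_off e f g); last by rewrite !andbF.
  by rewrite (good_agree_off dS fg) Sg eg.
have e_gt0 : 0 < #|e| by rewrite card_gt0.
by apply/eqP; rewrite -(eqn_pmul2l q_gt0) mulnA -expnS prednK // mulnC -count_pairs mulnC.
Qed.

Lemma good_setU1 (e : {set V}) (S : {set {set V}}) (f : coloring) :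
  good (e |: S) f = ~~ monochromatic e f && good S f.
Proof.
apply/forall_inP/andP => [Sf | [ef /forall_inP Sf] s].
  by split; [apply: Sf; rewrite setU11 | apply/forall_inP => s sS; apply: Sf; rewrite setU1r].
by rewrite in_setU1 => /predU1P [-> | /Sf].
Qed.

Lemma n_good_setU1 (e : {set V}) (S : {set {set V}}) :
  n_good S = n_good (e |: S) + n_good_mono e S.
Proof.
rewrite /n_good /n_good_mono -(cardsID [set f | monochromatic e f] [set f | good S f]).
by rewrite addnC; congr (_ + _); apply: eq_card => f; rewrite !inE ?good_setU1.
Qed.

Lemma good_subset (S T : {set {set V}}) (f : coloring) :
  S \subset T -> good T f -> good S f.
Proof. by move=> /subsetP ST /forall_inP Tf; apply/forall_inP => s /ST /Tf. Qed.

Lemma n_good_mono_subset (e : {set V}) (S T : {set {set V}}) :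
  S \subset T -> n_good_mono e T <= n_good_mono e S.
Proof.
move=> ST; apply/subset_leq_card/subsetP => f; rewrite !inE => /andP [Tf ef].
by rewrite ef (good_subset ST Tf).
Qed.

Lemma n_good_set0 : n_good set0 = q ^ #|V|.
Proof.
rewrite /n_good -[in RHS](card_ord q) -card_ffun; apply: eq_card => f.
by rewrite !inE; apply/forall_inP => s; rewrite inE.
Qed.

Lemma n_good_mono_le (e : {set V}) (S : {set {set V}}) :
  e != set0 -> q ^ #|e|.-1 * n_good_mono e S <= q ^ #|V|.
Proof.
move=> e0; rewrite -n_good_set0 -(n_good_mono_indep e0) => [|s]; last by rewrite inE.
by rewrite leq_mul2l n_good_mono_subset ?sub0set ?orbT.
Qed.

Lemma union_bound (r : nat) (T : {set {set V}}) :
  0 < r -> uniform r T ->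
  q ^ r.-1 * q ^ #|V| <= #|T| * q ^ #|V| + q ^ r.-1 * n_good T.
Proof.
move=> r_gt0; have [k] := ubnP #|T|; elim: k T => // k IH T /ltnSE Tk unifT.
have [-> | [t tT]] := set_0Vmem T; first by rewrite n_good_set0 cards0.
have T'k : #|T :\ t| < k by move: Tk; rewrite (cardsD1 t T) tT.
have unifT' : uniform r (T :\ t) by move=> s /setD1P [_ /unifT].
have t0 : t != set0 by rewrite -card_gt0 unifT.
have := IH _ T'k unifT'; have := n_good_mono_le (T :\ t) t0.
rewrite (cardsD1 t T) tT unifT // (n_good_setU1 t (T :\ t)) setD1K //.
set Z := q ^ #|V|; set M := n_good_mono _ _; set Y := n_good _; lia.
Qed.

Lemma n_good_setU1_ge (D : nat) (t : {set V}) (S : {set {set V}}) :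
  (D + 1) * n_good_mono t S <= n_good S -> D * n_good S <= (D + 1) * n_good (t |: S).
Proof. rewrite (n_good_setU1 t S); lia. Qed.

Lemma n_good_chain (D : nat) (A T : {set {set V}}) :
  [disjoint A & T] ->
  (forall (S : {set {set V}}) t, t \in T -> S \subset (A :|: T) :\ t ->
     (D + 1) * n_good_mono t S <= n_good S) ->
  D ^ #|T| * n_good A <= (D + 1) ^ #|T| * n_good (A :|: T).
Proof.
have [k] := ubnP #|T|; elim: k T => // k IH T /ltnSE Tk dAT mono_le.
have [-> | [t tT]] := set_0Vmem T; first by rewrite setU0 cards0 !mul1n.
have T'k : #|T :\ t| < k by move: Tk; rewrite (cardsD1 t T) tT.
have tA : t \notin A by rewrite (disjointFl dAT tT).
have IHt : D ^ #|T :\ t| * n_good A <= (D + 1) ^ #|T :\ t| * n_good (A :|: T :\ t).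
  apply: IH T'k (disjointWr (subsetDl _ _) dAT) _ => S s /setD1P [_ sT] sub.
  apply: mono_le sT (subset_trans sub _).
  by apply/setSD/setUS/subsetDl.
have step : D * n_good (A :|: T :\ t) <= (D + 1) * n_good (t |: (A :|: T :\ t)).
  apply/n_good_setU1_ge/mono_le => //; apply/subsetP => x; rewrite !inE.
  by case/orP => [xA | /andP [-> ->]]; [rewrite xA andbT; apply: contraNneq tA => <- | rewrite orbT].
have -> : A :|: T = t |: (A :|: T :\ t) by rewrite setUCA setD1K.
rewrite (cardsD1 t T) tT !expnS -!mulnA.
apply: leq_trans (leq_mul (leqnn D) IHt) _.
by rewrite mulnCA [X in _ <= X]mulnCA leq_mul2l step orbT.
Qed.

Section LocalLemma.
Variables (E : {set {set V}}) (r D : nat).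
Hypotheses (r_gt0 : 0 < r) (uniformE : uniform r E).
Hypothesis degree_le : forall e, e \in E -> nb_intersecting E e <= D.
Hypothesis lll_condition : (D + 1) ^ (D + 1) <= q ^ r.-1 * D ^ D.

(* Split S into the edges far from e, which do not affect e at all, and the at
   most D edges meeting e, each of which costs at most a factor D/(D+1). *)
Lemma lll_mono_bound (S : {set {set V}}) (e : {set V}) :
  S \subset E -> e \in E -> e \notin S -> (D + 1) * n_good_mono e S <= n_good S.
Proof.
have [k] := ubnP #|S|; elim: k S e => // k IH S e /ltnSE Sk SE eE eS.
set near := [set e' in E | (e' != e) && ~~ [disjoint e' & e]].
have e0 : e != set0 by rewrite -card_gt0 uniformE.
have far_disjoint : {in S :\: near, forall s : {set V}, [disjoint s & e]}.
  move=> s /setDP [sS]; rewrite inE (subsetP SE s sS) /=.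
  by case/nandP => [/negPn/eqP se | /negPn //]; rewrite -se sS in eS.
have far_bound : q ^ r.-1 * n_good_mono e S <= n_good (S :\: near).
  rewrite -(n_good_mono_indep e0 far_disjoint) -(uniformE eE) leq_mul2l.
  by rewrite n_good_mono_subset ?subsetDl ?orbT.
have S_split : (S :\: near) :|: (S :&: near) = S by rewrite setUC setID.
have near_bound : D ^ #|S :&: near| * n_good (S :\: near) <=
                  (D + 1) ^ #|S :&: near| * n_good S.
  rewrite -[X in _ <= _ * n_good X]S_split; apply: n_good_chain => [|S' t /setIP [tS tnear]].
    rewrite disjoints_subset; apply/subsetP => s /setDP [_ /negbTE far].
    by rewrite inE in_setI far andbF.
  rewrite S_split => sub; apply: IH.
  - apply: leq_ltn_trans (subset_leq_card sub) _.
    by move: Sk; rewrite (cardsD1 t S) tS.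
  - exact: subset_trans sub (subset_trans (subsetDl S [set t]) SE).
  - by move: tnear; rewrite inE => /andP [].
  - by apply/negP => /(subsetP sub); rewrite !inE eqxx.
have near_le : #|S :&: near| <= D.
  exact: leq_trans (subset_leq_card (subsetIr S near)) (degree_le eE).
have pos : 0 < q ^ r.-1 * (D + 1) ^ D by rewrite muln_gt0 !expn_gt0 q_gt0 addn1.
(* q^(r-1) (D+1)^D (D+1) M <= (D+1)^(D+1) N(far) <= q^(r-1) D^D N(far)
   <= q^(r-1) (D+1)^D N(S). *)
rewrite -(leq_pmul2l pos).
apply: (@leq_trans ((D + 1) ^ (D + 1) * n_good (S :\: near))).
  rewrite addn1 expnS -addn1 mulnCA -!mulnA leq_mul2l; apply/orP; right.
  by rewrite mulnCA leq_mul2l far_bound orbT.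
apply: (@leq_trans (q ^ r.-1 * D ^ D * n_good (S :\: near))); first exact: leq_mul.
rewrite -!mulnA leq_pmul2l ?expn_gt0 ?q_gt0 //.
have split_exp m : m ^ D = m ^ (D - #|S :&: near|) * m ^ #|S :&: near|.
  by rewrite -expnD subnK.
rewrite !split_exp -!mulnA; apply: leq_mul near_bound.
by case: (_ - _) => // a; rewrite leq_exp2r ?addn1.
Qed.

Lemma n_good_gt0 : 0 < D -> 0 < n_good E.
Proof.
move=> D_gt0.
have chain : D ^ #|E| * n_good set0 <= (D + 1) ^ #|E| * n_good (set0 :|: E).
  apply: n_good_chain => [|S t tE]; first by rewrite disjoints_subset sub0set.
  rewrite set0U => sub; apply: lll_mono_bound tE _.
    exact: subset_trans sub (subsetDl E [set t]).
  by apply/negP => /(subsetP sub); rewrite !inE eqxx.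
have lhs_gt0 : 0 < D ^ #|E| * n_good set0.
  by rewrite n_good_set0 muln_gt0 !expn_gt0 D_gt0 q_gt0.
by have := leq_trans lhs_gt0 chain; rewrite set0U muln_gt0 => /andP [].
Qed.

End LocalLemma.

End GoodColorings.

Lemma colorable_of_n_good_gt0 (V : finType) (E : {set {set V}}) (r : nat) :
  0 < r -> uniform r E -> 0 < n_good (r - 1) E -> colorable E.
Proof.
move=> r_gt0 unif; rewrite card_gt0 => /set0Pn [f]; rewrite inE => /forall_inP fE.
exists (fun v => val (f v)) => e eE; apply/andP; split.
- case/forall_inPn: (fE e eE) => x xe /forall_inPn [y ye fxy].
  have xy_uniq : uniq [:: val (f x); val (f y)].
    by rewrite /= inE andbT; apply: contra fxy => /eqP /val_inj ->.
  apply: uniq_leq_size xy_uniq _ => z; rewrite !inE mem_undup.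
  by case/orP => /eqP ->; apply: image_f.
- have colors_sub : {subset color_set (fun v => val (f v)) e <= iota 0 (r - 1)}.
    by move=> z; rewrite mem_undup => /imageP [v _ ->]; rewrite mem_iota ltn_ord.
  apply: leq_ltn_trans (uniq_leq_size (undup_uniq _) colors_sub) _.
  by rewrite size_iota unif //; lia.
Qed.

Section RealBounds.
Local Open Scope R_scope.

Lemma INR_expn (m n : nat) : INR (m ^ n)%N = INR m ^ n.
Proof. by elim: n => [|n IH]; rewrite ?expn0 // expnS mult_INR IH. Qed.

Lemma pow_exp (x : R) (n : nat) : exp x ^ n = exp (INR n * x).
Proof.
elim: n => [|n IH]; first by rewrite /= Rmult_0_l exp_0.
by rewrite S_INR /= IH -exp_plus; congr exp; ring.
Qed.

(* (1 + 1/D)^D <= e, from 1 + 1/D <= exp (1/D). *)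
Lemma succ_pow_le_exp (D : nat) : (0 < D)%N -> INR (D + 1) ^ D <= exp 1 * INR D ^ D.
Proof.
move=> /ltP /lt_0_INR D_pos.
have -> : INR (D + 1) = (1 + / INR D) * INR D by rewrite plus_INR /=; field; lra.
rewrite Rpow_mult_distr; apply: Rmult_le_compat_r; first by apply: pow_le; lra.
have -> : exp 1 = exp (/ INR D) ^ D by rewrite pow_exp; congr exp; field; lra.
apply: pow_incr; split; last exact: exp_ineq1_le.
by have := Rinv_0_lt_compat _ D_pos; lra.
Qed.

Lemma lll_condition_of_degree (D Q : nat) :
  (0 < D)%N -> INR D < INR Q * / exp 1 - 1 -> ((D + 1) ^ (D + 1) <= Q * D ^ D)%N.
Proof.
move=> D_gt0 deg_lt; apply/ltnW/ltP/INR_lt.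
have e_pos := exp_pos 1.
have succ_lt : INR (D + 1) * exp 1 < INR Q.
  have := Rmult_lt_compat_r _ _ _ e_pos (_ : INR (D + 1) < INR Q * / exp 1).
  rewrite Rmult_assoc Rinv_l ?Rmult_1_r; last lra.
  by apply; rewrite plus_INR /=; lra.
rewrite mult_INR !INR_expn (_ : INR (D + 1) ^ (D + 1) = INR (D + 1) * INR (D + 1) ^ D);
  last by rewrite addn1.
have pow_pos : 0 < INR D ^ D by apply/pow_lt/lt_0_INR/ltP.
have := succ_pow_le_exp D_gt0; have : 0 < INR (D + 1) by apply/lt_0_INR/ltP; rewrite addn1.
nra.
Qed.

End RealBounds.

Theorem theorem1p1 (V : finType) (E : {set {set V}}) (r : nat) :
  3 <= r ->
  bi_hypergraph E ->
  uniform r E ->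
  ( #|E| < (r - 1) ^ (r - 1)
    \/ (forall e, e \in E ->
          Rlt (INR (nb_intersecting E e))
              (Rminus (Rmult (INR ((r - 1) ^ (r - 1))) (Rinv (exp 1))) 1))) ->
  colorable E.
Proof.
move=> r_ge3 _ unif few_edges_or_sparse.
have r_gt0 : 0 < r by lia.
have q_gt0 : 0 < r - 1 by lia.
apply: (colorable_of_n_good_gt0 r_gt0 unif).
case: few_edges_or_sparse => [few_edges | sparse].
  have := union_bound q_gt0 r_gt0 unif; rewrite -subn1.
  have : 0 < (r - 1) ^ #|V| by rewrite expn_gt0 q_gt0.
  nia.
set m := \max_(e in E) nb_intersecting E e.
have deg_le e : e \in E -> nb_intersecting E e <= maxn 1 m.
  by move=> eE; rewrite leq_max leq_bigmax_cond ?orbT.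
apply: (n_good_gt0 q_gt0 r_gt0 unif deg_le); last by rewrite leq_max.
rewrite -subn1; have [m0 | m_gt0] := posnP m.
  rewrite m0 muln1 (leq_trans (_ : _ <= 2 ^ (r - 1))) ?leq_exp2r ?leq_exp2l //; lia.
have E_gt0 : 0 < #|E|.
  by rewrite card_gt0; apply: contraTneq m_gt0 => E0; rewrite /m E0 big_set0.
have [e0 e0E max_e0] := eq_bigmax_cond (nb_intersecting E) E_gt0.
rewrite (maxn_idPr m_gt0) /m max_e0; apply: lll_condition_of_degree (sparse e0 e0E).
by rewrite -max_e0.
Qed.
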